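(* Consider the diffeomorphisms of $\mathbb{B}$ induced, via the identification $\Phi$, by left translations $L_A(X)=AX$ or right translations $R_A(X)=XA$ of $\mathrm{Sp}(1,1)$ ($A\in\mathrm{Sp}(1,1)$) that commute with the left $\mathrm{Sp}(1)\times\{1\}$-action and the right $\mathrm{Sp}(1)I_2$-action on $\mathrm{Sp}(1,1)$ (and hence descend to $\mathbb{B}$). These diffeomorphisms are given by (i.e., generate the same group of transformations of $\mathbb{B}$ as) the following actions on $\mathbb{B}$: (1) the left action of $\{\pm1\}\times\mathrm{Sp}(1)=\{\operatorname{diag}(\epsilon,u):\epsilon=\pm1,\ u\in\mathrm{Sp}(1)\}$ given by $\operatorname{diag}(\epsilon,u)\cdot q=\epsilon uq\overline{u}$; (2) the right action of $\mathrm{SO}_0(1,1)$ by classical Möbius transformations, $q\cdot H(t)=F_{H(t)}(q)=(1+\tanh(t)q)^{-1}(q+\tanh(t))$.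
   Context: $\mathbb{H}$ denotes the quaternions, $\mathbb{B}=\{q\in\mathbb{H}:|q|<1\}$, $\mathrm{Sp}(1)=\{u\in\mathbb{H}:|u|=1\}$. Let $I_{1,1}=\operatorname{diag}(1,-1)$ and $\mathrm{Sp}(1,1)=\{A\in M_2(\mathbb{H}):A^*I_{1,1}A=I_{1,1}\}$. For $A=\begin{pmatrix}a&c\\ b&d\end{pmatrix}\in\mathrm{Sp}(1,1)$ the classical Möbius transformation is $F_A(q)=(qc+d)^{-1}(qa+b)$. For $t\in\mathbb{R}$, $H(t)=\begin{pmatrix}\cosh t&\sinh t\\ \sinh t&\cosh t\end{pmatrix}$ and $\mathrm{SO}_0(1,1)=\{H(t):t\in\mathbb{R}\}$. Slice regular functions and regular Möbius transformations: the slice regular functions on $\mathbb{B}$ are exactly the functions $f(q)=\sum_{n\ge0}q^na_n$ ($a_n\in\mathbb{H}$) with the series converging on $\mathbb{B}$. The $*$-product is $(\sum q^na_n)*(\sum q^nb_n)=\sum_n q^n\sum_{k=0}^n a_kb_{n-k}$; $f^c(q)=\sum q^n\overline{a_n}$, $f^s=f*f^c$, $f^{-*}=(f^s)^{-1}f^c$ (pointwise, off the zero set of $f^s$). For $a,b\in\mathbb{H}$ let $\ell_{a,b}(q)=qa+b$. For $A=\begin{pmatrix}a&c\\ b&d\end{pmatrix}\in\mathrm{Sp}(1,1)$, the regular Möbius transformation is $\mathcal{F}_A=\ell_{c,d}^{-*}*\ell_{a,b}$, a diffeomorphism of $\mathbb{B}$ onto $\mathbb{B}$. Identification $\Phi$: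 $\mathrm{Sp}(1)\times\{1\}=\{\operatorname{diag}(u,1)\}$ acts on $\mathrm{Sp}(1,1)$ by left multiplication and $\mathrm{Sp}(1)I_2=\{uI_2\}$ by right multiplication. It is known that $\Phi:(\mathrm{Sp}(1)\times\{1\})\backslash\mathrm{Sp}(1,1)/\mathrm{Sp}(1)I_2\to\mathbb{B}$, $[A]\mapsto(\mathcal{F}_{A^{-1}})^{-1}(0)$, is a well-defined diffeomorphism. A diffeomorphism $\widetilde f$ of $\mathrm{Sp}(1,1)$ commuting with both actions induces the diffeomorphism $f$ of $\mathbb{B}$ with $f(\Phi([X]))=\Phi([\widetilde f(X)])$. *)

From HB Require Import structures.
From mathcomp Require Import all_boot all_order all_algebra.
From mathcomp Require Import reals exp sequences.
Set Implicit Arguments. Unset Strict Implicit. Unset Printing Implicit Defensive.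
Import Order.TTheory GRing.Theory Num.Theory.
Local Open Scope ring_scope.

Section Quaternions.
Variable R : realType.

Record quat := Quat { q0 : R; q1 : R; q2 : R; q3 : R }.

Definition qreal (r : R) : quat := Quat r 0 0 0.
Definition qzero : quat := qreal 0.
Definition qone : quat := qreal 1.
Definition qadd (x y : quat) : quat :=
  Quat (q0 x + q0 y) (q1 x + q1 y) (q2 x + q2 y) (q3 x + q3 y).
Definition qopp (x : quat) : quat := Quat (- q0 x) (- q1 x) (- q2 x) (- q3 x).
Definition qmul (x y : quat) : quat :=
  Quat (q0 x * q0 y - q1 x * q1 y - q2 x * q2 y - q3 x * q3 y)
       (q0 x * q1 y + q1 x * q0 y + q2 x * q3 y - q3 x * q2 y)
       (q0 x * q2 y - q1 x * q3 y + q2 x * q0 y + q3 x * q1 y)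
       (q0 x * q3 y + q1 x * q2 y - q2 x * q1 y + q3 x * q0 y).
Definition qconj (x : quat) : quat := Quat (q0 x) (- q1 x) (- q2 x) (- q3 x).
Definition qnorm2 (x : quat) : R := q0 x ^+ 2 + q1 x ^+ 2 + q2 x ^+ 2 + q3 x ^+ 2.
Definition qscale (r : R) (x : quat) : quat :=
  Quat (r * q0 x) (r * q1 x) (r * q2 x) (r * q3 x).
Definition qinv (x : quat) : quat := qscale (qnorm2 x)^-1 (qconj x).

Definition inB (q : quat) : Prop := qnorm2 q < 1.
Definition inSp1 (u : quat) : Prop := qnorm2 u = 1.
Definition Ball := {q : quat | inB q}.

(** 2x2 quaternionic matrices  [[m00, m01], [m10, m11]].
    The paper's A = (a c ; b d) is  m00 = a, m01 = c, m10 = b, m11 = d. *)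
Record mat2 := Mat2 { m00 : quat; m01 : quat; m10 : quat; m11 : quat }.

Definition mmul (A B : mat2) : mat2 :=
  Mat2 (qadd (qmul (m00 A) (m00 B)) (qmul (m01 A) (m10 B)))
       (qadd (qmul (m00 A) (m01 B)) (qmul (m01 A) (m11 B)))
       (qadd (qmul (m10 A) (m00 B)) (qmul (m11 A) (m10 B)))
       (qadd (qmul (m10 A) (m01 B)) (qmul (m11 A) (m11 B))).
Definition mstar (A : mat2) : mat2 :=
  Mat2 (qconj (m00 A)) (qconj (m10 A)) (qconj (m01 A)) (qconj (m11 A)).
Definition mdiag (x y : quat) : mat2 := Mat2 x qzero qzero y.
Definition mid : mat2 := mdiag qone qone.
Definition I11 : mat2 := mdiag qone (qopp qone).

Definition inSp11 (A : mat2) : Prop := mmul (mmul (mstar A) I11) A = I11.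

Definition Fcl (A : mat2) (q : quat) : quat :=
  qmul (qinv (qadd (qmul q (m01 A)) (m11 A)))
       (qadd (qmul q (m00 A)) (m10 A)).

Definition coshR (t : R) : R := (expR t + expR (- t)) / 2.
Definition sinhR (t : R) : R := (expR t - expR (- t)) / 2.
Definition Hmat (t : R) : mat2 :=
  Mat2 (qreal (coshR t)) (qreal (sinhR t)) (qreal (sinhR t)) (qreal (coshR t)).

(** Slice polynomials  f(q) = sum_n q^n a_n, coefficients listed a_0, a_1, ... *)
Definition spoly := seq quat.

Fixpoint speval (p : spoly) (q : quat) : quat :=
  match p with
  | [::] => qzero
  | a :: p' => qadd a (qmul q (speval p' q))
  end.

Fixpoint spadd (p r : spoly) : spoly :=
  match p, r with
  | [::], _ => r
  | _, [::] => p
  | a :: p', b :: r' => qadd a b :: spadd p' r'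
  end.

(* *-product: coefficient n is sum_{k<=n} a_k b_{n-k} *)
Fixpoint sstar (p r : spoly) : spoly :=
  match p with
  | [::] => [::]
  | a :: p' => spadd (map (qmul a) r) (qzero :: sstar p' r)
  end.

Definition sconj (p : spoly) : spoly := map qconj p.
Definition ssym (p : spoly) : spoly := sstar p (sconj p).

Definition sinvstar (p : spoly) (q : quat) : quat :=
  qmul (qinv (speval (ssym p) q)) (speval (sconj p) q).

(* *-product h * p of a slice regular function h = sum_m q^m c_m with a slice
   polynomial p = sum_n q^n b_n:  (h * p)(q) = sum_{m,n} q^(m+n) c_m b_n
   = sum_n q^n h(q) b_n. *)
Fixpoint star_fun_poly (h : quat -> quat) (p : spoly) (q : quat) : quat :=
  match p with
  | [::] => qzero
  | b :: p' => qadd (qmul (h q) b) (qmul q (star_fun_poly h p' q))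
  end.

Definition lin (a b : quat) : spoly := [:: b; a].

Definition RegMob (A : mat2) : quat -> quat :=
  star_fun_poly (sinvstar (lin (m01 A) (m11 A))) (lin (m00 A) (m10 A)).

(** Phi([X]) = (F_{X^{-1}})^{-1}(0), written as a relation:
    Phi_rel X q  <->  q is the point of B with F_{X^{-1}}(q) = 0. *)
Definition Phi_rel (X : mat2) (q : Ball) : Prop :=
  exists Y, mmul Y X = mid /\ mmul X Y = mid /\ RegMob Y (val q) = qzero.

Definition commutes_actions (ft : mat2 -> mat2) : Prop :=
  forall u X, inSp1 u -> inSp11 X ->
    ft (mmul (mdiag u qone) X) = mmul (mdiag u qone) (ft X) /\
    ft (mmul X (mdiag u u)) = mmul (ft X) (mdiag u u).

Definition induced (ft : mat2 -> mat2) (f : Ball -> Ball) : Prop :=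
  forall X, inSp11 X -> forall q, Phi_rel X q -> Phi_rel (ft X) (f q).

Definition translation_maps (f : Ball -> Ball) : Prop :=
  exists A, inSp11 A /\
    ((commutes_actions (mmul A) /\ induced (mmul A) f) \/
     (commutes_actions (fun X => mmul X A) /\ induced (fun X => mmul X A) f)).

Definition listed_maps (f : Ball -> Ball) : Prop :=
  (exists (eps : R) (u : quat), (eps = 1 \/ eps = -1) /\ inSp1 u /\
     forall q, val (f q) = qmul (qmul (qmul (qreal eps) u) (val q)) (qconj u))
  \/ (exists t : R, forall q, val (f q) = Fcl (Hmat t) (val q)).

End Quaternions.

Inductive gen_group (T : Type) (S : (T -> T) -> Prop) : (T -> T) -> Prop :=
  | gen_in f : S f -> gen_group S f
  | gen_id : gen_group S id
  | gen_comp f g : gen_group S f -> gen_group S g -> gen_group S (f \o g)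
  | gen_inv f g : gen_group S f -> cancel f g -> cancel g f -> gen_group S g.

(* For X = (a c; b d) in Sp(1,1), Phi([X]) = b d^-1.  Indeed X^-1 = I11 X^* I11, and
   the regular Moebius transformation of any A in Sp(1,1) is (l^s)^-1 (l^c * l_{a,b})
   with l = l_{c,d}, where l^s is a real quadratic without zeros in the ball.  For
   A = X^-1 the numerator vanishes at q exactly when q (1 - q m) = (1 - q m) m with
   m = b d^-1, and in the ball this forces q = m.
   Commuting with the Sp(1) x {1}-action forces a left translation A to be diagonal,
   A = diag(a, d), and it then induces q |-> d q d^-1.  Commuting with the Sp(1) I_2-
   action forces a right translation A to have real entries; it then induces a
   classical Moebius map, and a real matrix of Sp(1,1) is +-H(t) or +-H(t) I11, which
   induce F_H(t) and -F_H(t).  Finally q |-> -q is the right translation by diag(-1,1). *)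

From HB Require Import structures.
From mathcomp Require Import all_boot all_order all_algebra reals exp.
From mathcomp Require Import ring lra.
From Stdlib Require Import FunctionalExtensionality.
Set Implicit Arguments. Unset Strict Implicit. Unset Printing Implicit Defensive.
Import Order.TTheory GRing.Theory Num.Theory.
Local Open Scope ring_scope.

Lemma quat_ext (R : realType) (x y : quat R) :
  q0 x = q0 y -> q1 x = q1 y -> q2 x = q2 y -> q3 x = q3 y -> x = y.
Proof. by case: x => ????; case: y => ???? /= -> -> -> ->. Qed.

Lemma quat_eqP (R : realType) (x y : quat R) : x = y ->
  [/\ q0 x = q0 y, q1 x = q1 y, q2 x = q2 y & q3 x = q3 y].
Proof. by move=> ->. Qed.

Ltac qext := apply: quat_ext => /=; ring.

Definition quat_tuple (R : realType) (x : quat R) := (q0 x, q1 x, q2 x, q3 x).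
Definition tuple_quat (R : realType) (p : R * R * R * R) :=
  let: (a, b, c, d) := p in Quat a b c d.
Lemma quat_tupleK (R : realType) : cancel (@quat_tuple R) (@tuple_quat R).
Proof. by case. Qed.

HB.instance Definition _ (R : realType) :=
  Choice.copy (quat R) (can_type (@quat_tupleK R)).

Section QuaternionRing.
Variable R : realType.

Lemma qaddA : associative (@qadd R). Proof. by move=> ???; qext. Qed.
Lemma qaddC : commutative (@qadd R). Proof. by move=> ??; qext. Qed.
Lemma qadd0 : left_id (qzero R) (@qadd R). Proof. by move=> ?; qext. Qed.
Lemma qaddN : left_inverse (qzero R) (@qopp R) (@qadd R). Proof. by move=> ?; qext. Qed.
Lemma qmulA : associative (@qmul R). Proof. by move=> ???; qext. Qed.
Lemma qmul1 : left_id (qone R) (@qmul R). Proof. by move=> ?; qext. Qed.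
Lemma qmulq1 : right_id (qone R) (@qmul R). Proof. by move=> ?; qext. Qed.
Lemma qmulDl : left_distributive (@qmul R) (@qadd R). Proof. by move=> ???; qext. Qed.
Lemma qmulDr : right_distributive (@qmul R) (@qadd R). Proof. by move=> ???; qext. Qed.
Lemma qone_neq0 : qone R != qzero R.
Proof. by apply/eqP => /(congr1 (@q0 R)) /= /eqP; rewrite oner_eq0. Qed.

End QuaternionRing.

HB.instance Definition _ (R : realType) := GRing.isNzRing.Build (quat R)
  (@qaddA R) (@qaddC R) (@qadd0 R) (@qaddN R) (@qmulA R) (@qmul1 R) (@qmulq1 R)
  (@qmulDl R) (@qmulDr R) (@qone_neq0 R).

Section QuaternionNorm.
Variable R : realType.
Implicit Types x y : quat R.

Lemma qnorm2_ge0 x : 0 <= qnorm2 x.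
Proof. by rewrite /qnorm2 !addr_ge0 ?sqr_ge0. Qed.

Lemma qnorm2_0 : qnorm2 (0 : quat R) = 0.
Proof. by rewrite /qnorm2 /=; ring. Qed.

Lemma qnorm2_eq0 x : qnorm2 x = 0 -> x = 0.
Proof.
case: x => a b c d; rewrite /qnorm2 /= => h.
have ha : a = 0 by nra.
have hb : b = 0 by nra.
have hc : c = 0 by nra.
have hd : d = 0 by nra.
by apply: quat_ext.
Qed.

Lemma qnorm2M x y : qnorm2 (x * y) = qnorm2 x * qnorm2 y.
Proof. by rewrite /qnorm2 /=; ring. Qed.

Definition qunit : pred (quat R) := fun x => qnorm2 x != 0.

Lemma qmulVq x : qunit x -> qmul (qinv x) x = 1.
Proof. by rewrite /qunit => hx; apply: quat_ext; rewrite /= /qnorm2 in hx *; field. Qed.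

Lemma qmulqV x : qunit x -> qmul x (qinv x) = 1.
Proof. by rewrite /qunit => hx; apply: quat_ext; rewrite /= /qnorm2 in hx *; field. Qed.

Lemma qunitP x y : y * x = 1 /\ x * y = 1 -> qunit x.
Proof.
case=> /(congr1 (@qnorm2 R)); rewrite qnorm2M => h _; apply/eqP => hx.
have : qnorm2 (1 : quat R) = 1 by rewrite /qnorm2 /=; ring.
by rewrite -h hx mulr0 => /eqP; rewrite eq_sym oner_eq0.
Qed.

Lemma qinv_out : {in [predC qunit], (@qinv R) =1 id}.
Proof.
move=> x; rewrite inE /qunit negbK => /eqP /qnorm2_eq0 ->.
by apply: quat_ext; rewrite /= /qnorm2 /= expr0n /= !addr0 invr0; ring.
Qed.

End QuaternionNorm.

HB.instance Definition _ (R : realType) := GRing.NzRing_hasMulInverse.Build (quat R)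
  (@qmulVq R) (@qmulqV R) (@qunitP R) (@qinv_out R).

Section Quaternions.
Variable R : realType.
Implicit Types x y q u : quat R.
Implicit Types r s : R.

Lemma qmulE x y : qmul x y = x * y. Proof. by []. Qed.
Lemma qaddE x y : qadd x y = x + y. Proof. by []. Qed.
Lemma qoppE x : qopp x = - x. Proof. by []. Qed.
Lemma qzeroE : qzero R = 0. Proof. by []. Qed.
Lemma qoneE : qone R = 1. Proof. by []. Qed.
Lemma qinvE x : qinv x = x^-1. Proof. by []. Qed.
Definition qE := (qmulE, qaddE, qoppE, qzeroE, qoneE, qinvE).

Lemma qunitE x : (x \is a GRing.unit) = (qnorm2 x != 0). Proof. by []. Qed.

Lemma qunit_gt0 x : 0 < qnorm2 x -> x \is a GRing.unit.
Proof. by rewrite qunitE => /lt0r_neq0. Qed.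

Lemma qreal_comm r x : GRing.comm (qreal r) x. Proof. by rewrite /GRing.comm; qext. Qed.
Lemma qrealM r s : qreal (r * s) = qreal r * qreal s. Proof. by qext. Qed.
Lemma qrealN r : qreal (- r) = - qreal r. Proof. by qext. Qed.
Lemma qreal1 : qreal 1 = 1 :> quat R. Proof. by []. Qed.
Lemma qreal0 : qreal 0 = 0 :> quat R. Proof. by []. Qed.

Lemma qmul_conj x : x * qconj x = qreal (qnorm2 x). Proof. by rewrite /qnorm2; qext. Qed.
Lemma qconj_mul x : qconj x * x = qreal (qnorm2 x). Proof. by rewrite /qnorm2; qext. Qed.

Lemma qnorm2_conj x : qnorm2 (qconj x) = qnorm2 x. Proof. by rewrite /qnorm2 /=; ring. Qed.
Lemma qnorm2_real r : qnorm2 (qreal r) = r ^+ 2. Proof. by rewrite /qnorm2 /=; ring. Qed.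

Lemma qnorm2V x : qnorm2 x^-1 = (qnorm2 x)^-1.
Proof.
have [/qnorm2_eq0 ->|hx] := eqVneq (qnorm2 x) 0; first by rewrite invr0 qnorm2_0 invr0.
by rewrite -qinvE /qinv /qnorm2 /= in hx *; field.
Qed.

Lemma qrealV r : (qreal r)^-1 = qreal r^-1.
Proof.
have [->|hr] := eqVneq r 0; first by rewrite qreal0 !invr0.
by rewrite -qinvE /qinv qnorm2_real; apply: quat_ext => /=; field.
Qed.

Lemma qinv_sphere u : inSp1 u -> u^-1 = qconj u.
Proof. by rewrite /inSp1 => hu; rewrite -qinvE /qinv hu invr1; qext. Qed.

Lemma sphere_unit u : inSp1 u -> u \is a GRing.unit.
Proof. by move=> hu; apply: qunit_gt0; rewrite hu. Qed.

End Quaternions.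

Lemma mat_ext (R : realType) (A B : mat2 R) :
  m00 A = m00 B -> m01 A = m01 B -> m10 A = m10 B -> m11 A = m11 B -> A = B.
Proof. by case: A => ????; case: B => ???? /= -> -> -> ->. Qed.

Ltac mext := apply: mat_ext; qext.

Section SymplecticGroup.
Variable R : realType.
Implicit Types A B X Y : mat2 R.
Implicit Types x y : quat R.

Lemma mmulA : associative (@mmul R).
Proof. by case=> ????; case=> ????; case=> ????; mext. Qed.

Lemma mmul1m : left_id (mid R) (@mmul R). Proof. by case=> ????; mext. Qed.
Lemma mmulm1 : right_id (mid R) (@mmul R). Proof. by case=> ????; mext. Qed.

Lemma mstarM A B : mstar (mmul A B) = mmul (mstar B) (mstar A).
Proof. by case: A => ????; case: B => ????; mext. Qed.

Lemma mstar_mid : mstar (mid R) = mid R. Proof. by mext. Qed.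

Lemma sp11_mid : inSp11 (mid R). Proof. by mext. Qed.

Lemma mmul_diagl x y A :
  mmul (mdiag x y) A = Mat2 (x * m00 A) (x * m01 A) (y * m10 A) (y * m11 A).
Proof. by case: A => ????; mext. Qed.

Lemma mmul_diagr A x y :
  mmul A (mdiag x y) = Mat2 (m00 A * x) (m01 A * y) (m10 A * x) (m11 A * y).
Proof. by case: A => ????; mext. Qed.

Lemma sp11M A B : inSp11 A -> inSp11 B -> inSp11 (mmul A B).
Proof.
rewrite /inSp11 mstarM => hA hB.
have -> : mmul (mmul (mmul (mstar B) (mstar A)) (I11 R)) (mmul A B) =
  mmul (mmul (mstar B) (mmul (mmul (mstar A) (I11 R)) A)) B by rewrite !mmulA.
by rewrite hA.
Qed.

Lemma sp11_cols X : inSp11 X ->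
  [/\ qnorm2 (m00 X) - qnorm2 (m10 X) = 1, qnorm2 (m11 X) - qnorm2 (m01 X) = 1
    & qconj (m01 X) * m00 X = qconj (m11 X) * m10 X].
Proof.
case: X => a c b d /[dup] /(congr1 (@m00 R)) /quat_eqP [h1 _ _ _].
move=> /[dup] /(congr1 (@m11 R)) /quat_eqP [h2 _ _ _].
move=> /(congr1 (@m10 R)) /quat_eqP [h3 h4 h5 h6] /=.
rewrite /= in h1 h2 h3 h4 h5 h6; rewrite /qnorm2.
by split; [lra | lra | apply: quat_ext => /=; lra].
Qed.

(* The row relations follow from the column relations by taking norms in c^* a = d^* b. *)
Lemma sp11_rows X : inSp11 X ->
  [/\ qnorm2 (m10 X) = qnorm2 (m01 X), qnorm2 (m00 X) = qnorm2 (m11 X)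
    & m10 X * qconj (m00 X) = m11 X * qconj (m01 X)].
Proof.
case: X => a c b d /sp11_cols /= [ha hd hcb].
have hn := congr1 (@qnorm2 R) hcb; rewrite !qnorm2M !qnorm2_conj in hn.
have hb0 := qnorm2_ge0 b; have hc0 := qnorm2_ge0 c.
have hbc : qnorm2 b = qnorm2 c by nra.
have had : qnorm2 a = qnorm2 d by lra.
split => //.
have hd0 : qreal (qnorm2 d) \is a GRing.unit by rewrite qunitE qnorm2_real sqrf_eq0; apply/eqP; lra.
apply: (mulIr hd0); symmetry.
rewrite -{1}had -qmul_conj -!mulrA (mulrA (qconj c)) hcb !mulrA qmul_conj -mulrA.
exact: qreal_comm.
Qed.

Definition sp11_inv X :=
  Mat2 (qconj (m00 X)) (- qconj (m10 X)) (- qconj (m01 X)) (qconj (m11 X)).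

Lemma sp11_invE X : sp11_inv X = mmul (mmul (I11 R) (mstar X)) (I11 R).
Proof. by case: X => ????; mext. Qed.

Lemma sp11_mulVm X : inSp11 X -> mmul (sp11_inv X) X = mid R.
Proof.
rewrite /inSp11 sp11_invE => hX.
by rewrite -!mmulA (mmulA (mstar X)) hX; mext.
Qed.

Lemma sp11_mulmV X : inSp11 X -> mmul X (sp11_inv X) = mid R.
Proof.
move=> hX; have [h1 h2 /quat_eqP[e1 e2 e3 e4]] := sp11_cols hX.
have [h3 h4 /quat_eqP[f1 f2 f3 f4]] := sp11_rows hX.
move: h1 h2 h3 h4 e1 e2 e3 e4 f1 f2 f3 f4; case: X {hX} => a c b d /=.
rewrite /qnorm2 => *; apply: mat_ext; apply: quat_ext => /=; lra.
Qed.

Lemma sp11_inv_sp11 X : inSp11 X -> inSp11 (sp11_inv X).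
Proof.
move=> hX; rewrite /inSp11 -{1}hX.
have -> : mmul (mmul (mstar (sp11_inv X)) (mmul (mmul (mstar X) (I11 R)) X)) (sp11_inv X)
        = mmul (mmul (mstar (mmul X (sp11_inv X))) (I11 R)) (mmul X (sp11_inv X)).
  by rewrite mstarM !mmulA.
by rewrite sp11_mulmV // mstar_mid mmul1m mmulm1.
Qed.

Definition rmat (a c b d : R) := Mat2 (qreal a) (qreal c) (qreal b) (qreal d).

Lemma rmat_sp11P a c b d : inSp11 (rmat a c b d) <->
  [/\ a ^+ 2 - b ^+ 2 = 1, d ^+ 2 - c ^+ 2 = 1 & c * a = d * b].
Proof.
split.
  move=> /sp11_cols[]; rewrite /= !qnorm2_real => h1 h2 /quat_eqP[h3 _ _ _].
  by split=> //; move: h3 => /=; lra.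
by case=> h1 h2 h3; apply: mat_ext; apply: quat_ext => /=; lra.
Qed.

End SymplecticGroup.

Section SliceRegular.
Variable R : realType.
Implicit Types x y q : quat R.
Implicit Types A : mat2 R.

Definition qdot x y := q0 x * q0 y + q1 x * q1 y + q2 x * q2 y + q3 x * q3 y.

Lemma qdot_sqr_le x y : qdot x y ^+ 2 <= qnorm2 x * qnorm2 y.
Proof.
rewrite -subr_ge0.
have -> : qnorm2 x * qnorm2 y - qdot x y ^+ 2 =
    (q0 x * q1 y - q1 x * q0 y) ^+ 2 + (q0 x * q2 y - q2 x * q0 y) ^+ 2 +
    (q0 x * q3 y - q3 x * q0 y) ^+ 2 + (q1 x * q2 y - q2 x * q1 y) ^+ 2 +
    (q1 x * q3 y - q3 x * q1 y) ^+ 2 + (q2 x * q3 y - q3 x * q2 y) ^+ 2.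
  by rewrite /qnorm2 /qdot; ring.
by rewrite !addr_ge0 ?sqr_ge0.
Qed.

Definition rquad (c0 c1 c2 : R) q := qreal c0 + q * qreal c1 + q * q * qreal c2.

Lemma rquad_comm c0 c1 c2 q : GRing.comm q (rquad c0 c1 c2 q).
Proof. by rewrite /GRing.comm /rquad; qext. Qed.

(* Write q = x + v with v imaginary, |v|^2 = y.  A zero of rquad either has v = 0,
   a real root x with x^2 < 1, excluded by c1^2 <= 4 c0 c2 and c2 < c0, or has
   2 c2 x + c1 = 0 and then c0 = c2 |q|^2 < c2. *)
Lemma rquad_unit c0 c1 c2 q : 0 <= c2 -> c2 < c0 -> c1 ^+ 2 <= 4 * c0 * c2 ->
  qnorm2 q < 1 -> rquad c0 c1 c2 q \is a GRing.unit.
Proof.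
move=> hc2 hc0 hdisc hq; rewrite qunitE.
have -> : qnorm2 (rquad c0 c1 c2 q) =
    (c0 + c1 * q0 q + c2 * (q0 q ^+ 2 - (q1 q ^+ 2 + q2 q ^+ 2 + q3 q ^+ 2))) ^+ 2 +
    (c1 + 2 * c2 * q0 q) ^+ 2 * (q1 q ^+ 2 + q2 q ^+ 2 + q3 q ^+ 2).
  by rewrite /qnorm2 /rquad /=; ring.
have : q0 q ^+ 2 + (q1 q ^+ 2 + q2 q ^+ 2 + q3 q ^+ 2) < 1 by move: hq; rewrite /qnorm2; lra.
move: (q0 q) (q1 q ^+ 2 + q2 q ^+ 2 + q3 q ^+ 2)
  (addr_ge0 (addr_ge0 (sqr_ge0 (q1 q)) (sqr_ge0 (q2 q))) (sqr_ge0 (q3 q))) => x y hy {}hq.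
apply/eqP => h.
have hw : 0 <= (c1 + 2 * c2 * x) ^+ 2 * y by rewrite mulr_ge0 ?sqr_ge0.
have hu0 : c0 + c1 * x + c2 * (x ^+ 2 - y) = 0.
  by apply/eqP; rewrite -sqrf_eq0; apply/eqP; have := sqr_ge0 (c0 + c1 * x + c2 * (x ^+ 2 - y)); lra.
move: h; rewrite hu0 expr0n /= add0r => /eqP; rewrite mulf_eq0 sqrf_eq0 => /orP[] /eqP hw0.
  have hc1 : c1 = - (2 * c2 * x) by lra.
  have e : c0 = c2 * (x ^+ 2 + y).
    by apply/eqP; rewrite -subr_eq0 -hu0 hc1; apply/eqP; ring.
  have : c2 * (x ^+ 2 + y) <= c2 * 1 by rewrite ler_wpM2l //; lra.
  lra.
rewrite hw0 subr0 in hu0.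
have e : (c1 * x + 2 * c0) ^+ 2 + (4 * c0 * c2 - c1 ^+ 2) * x ^+ 2 = 0.
  by rewrite -[RHS](mulr0 (4 * c0)) -hu0; ring.
have hp : 0 <= (4 * c0 * c2 - c1 ^+ 2) * x ^+ 2 by rewrite mulr_ge0 ?sqr_ge0 // subr_ge0.
have /eqP : (c1 * x + 2 * c0) ^+ 2 = 0 by have := sqr_ge0 (c1 * x + 2 * c0); lra.
rewrite sqrf_eq0 => /eqP hx.
have hx2 : x ^+ 2 < 1 by lra.
nra.
Qed.

Lemma speval_ssym_lin c d q :
  speval (ssym (lin c d)) q = rquad (qnorm2 d) (2 * qdot c d) (qnorm2 c) q.
Proof. by rewrite /rquad /qnorm2 /qdot; qext. Qed.

Lemma star_fun_poly_mull (s h : quat R -> quat R) p q : GRing.comm q (s q) ->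
  star_fun_poly (fun z => s z * h z) p q = s q * star_fun_poly h p q.
Proof.
move=> hs; elim: p => [|b p IH] /=; first by rewrite !qE mulr0.
by rewrite IH !qE mulrDr !mulrA hs.
Qed.

Definition RegMob_num A q :=
  star_fun_poly (speval (sconj (lin (m01 A) (m11 A)))) (lin (m00 A) (m10 A)) q.

(* The real-coefficient factor (l^s)^-1 commutes with the variable, hence comes out
   of the *-product. *)
Lemma RegMobE A q :
  RegMob A q = (speval (ssym (lin (m01 A) (m11 A))) q)^-1 * RegMob_num A q.
Proof.
apply: (star_fun_poly_mull (s := fun z => (speval (ssym (lin (m01 A) (m11 A))) z)^-1)).
by apply: commrV; rewrite speval_ssym_lin; apply: rquad_comm.
Qed.

Lemma RegMob_eq0 A q : inSp11 A -> qnorm2 q < 1 ->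
  RegMob A q = 0 <-> RegMob_num A q = 0.
Proof.
move=> hA hq; have [_ hd _] := sp11_cols hA.
have hS : speval (ssym (lin (m01 A) (m11 A))) q \is a GRing.unit.
  rewrite speval_ssym_lin; apply: rquad_unit => //; rewrite ?qnorm2_ge0 //; first by lra.
  by have := qdot_sqr_le (m01 A) (m11 A); lra.
rewrite RegMobE; split => [h|->]; last by rewrite mulr0.
by rewrite -(mulVKr hS (RegMob_num A q)) h mulr0.
Qed.

End SliceRegular.

Section PhiPoint.
Variable R : realType.
Implicit Types x y q m : quat R.
Implicit Types X : mat2 R.

Definition phi_point X := m10 X / m11 X.

Lemma sp11_m11_unit X : inSp11 X -> m11 X \is a GRing.unit.
Proof. by case/sp11_cols=> _ hd _; apply: qunit_gt0; have := qnorm2_ge0 (m01 X); lra. Qed.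

Lemma sp11_m00_unit X : inSp11 X -> m00 X \is a GRing.unit.
Proof. by case/sp11_cols=> ha _ _; apply: qunit_gt0; have := qnorm2_ge0 (m10 X); lra. Qed.

Lemma m10_phi_point X : inSp11 X -> m10 X = phi_point X * m11 X.
Proof. by move=> hX; rewrite divrK ?sp11_m11_unit. Qed.

Lemma phi_point_ball X : inSp11 X -> qnorm2 (phi_point X) < 1.
Proof.
move=> hX; have [ha _ _] := sp11_cols hX; have [_ had _] := sp11_rows hX.
have hb := qnorm2_ge0 (m10 X).
by rewrite qnorm2M qnorm2V -had ltr_pdivrMr; lra.
Qed.

Lemma RegMob_num_sp11_inv X q : inSp11 X ->
  RegMob_num (sp11_inv X) q * m00 X =
  qreal (qnorm2 (m11 X)) *
    (q * (1 - q * phi_point X) - (1 - q * phi_point X) * phi_point X) * m11 X.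
Proof.
move=> hX.
have -> : RegMob_num (sp11_inv X) q =
    (m11 X - q * m10 X) * - qconj (m01 X) + q * ((m11 X - q * m10 X) * qconj (m00 X)).
  by rewrite /RegMob_num; case: X {hX} => a c b d; qext.
have [_ _ hca] := sp11_cols hX; have [_ had _] := sp11_rows hX.
rewrite (m10_phi_point hX) in hca *.
move: (phi_point X) (m00 X) (m01 X) (m11 X) hca had => m a c d hca had.
have -> : d - q * (m * d) = (1 - q * m) * d by rewrite mulrBl mul1r mulrA.
rewrite mulrDl mulrN mulNr -!mulrA hca qconj_mul had (mulrA d) qmul_conj.
by qext.
Qed.

(* The equation means q - m = q (q - m) m, and multiplication by a point of the ball
   is a strict contraction. *)
Lemma ball_intertwine_eq q m : qnorm2 q < 1 -> qnorm2 m < 1 ->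
  q * (1 - q * m) = (1 - q * m) * m -> q = m.
Proof.
move=> hq hm h.
have e : q - m = q * (q - m) * m.
  apply/eqP; rewrite -subr_eq0; apply/eqP.
  have -> : q - m - q * (q - m) * m = q * (1 - q * m) - (1 - q * m) * m by qext.
  by rewrite h subrr.
have := congr1 (@qnorm2 R) e; rewrite !qnorm2M => hn.
have hqm : qnorm2 q * qnorm2 m < 1.
  by have := qnorm2_ge0 q; have := qnorm2_ge0 m; nra.
have /eqP : qnorm2 (q - m) * (1 - qnorm2 q * qnorm2 m) = 0.
  by rewrite mulrBr mulr1 {1}hn; ring.
rewrite mulf_eq0 subr_eq0 (gt_eqF hqm) orbF => /eqP /qnorm2_eq0.
exact: subr0_eq.
Qed.

Lemma RegMob_sp11_inv_eq0 X q : inSp11 X -> qnorm2 q < 1 ->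
  RegMob (sp11_inv X) q = 0 <-> q = phi_point X.
Proof.
move=> hX hq; rewrite (RegMob_eq0 (sp11_inv_sp11 hX) hq).
have hn : qreal (qnorm2 (m11 X)) \is a GRing.unit.
  by rewrite qunitE qnorm2_real sqrf_eq0 -qunitE sp11_m11_unit.
split => [hN | ->].
  apply: (ball_intertwine_eq hq (phi_point_ball hX)); apply/eqP; rewrite -subr_eq0; apply/eqP.
  apply: (mulrI hn); apply: (mulIr (sp11_m11_unit hX)).
  by rewrite -RegMob_num_sp11_inv // hN mulr0 !mul0r.
have hc m : m * (1 - m * m) - (1 - m * m) * m = 0.
  by rewrite mulrBr mulrBl mulr1 mul1r mulrA subrr.
by rewrite -[LHS](mulrK (sp11_m00_unit hX)) RegMob_num_sp11_inv // hc mulr0 !mul0r.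
Qed.

Lemma Phi_relP X (p : Ball R) : inSp11 X -> Phi_rel X p <-> val p = phi_point X.
Proof.
move=> hX; have hp : qnorm2 (val p) < 1 := valP p.
split => [[Y [hYX [hXY hY]]] | e].
  have eY : Y = sp11_inv X by rewrite -[Y]mmul1m -(sp11_mulVm hX) -mmulA hXY mmulm1.
  by apply/RegMob_sp11_inv_eq0 => //; rewrite -eY.
exists (sp11_inv X); rewrite sp11_mulVm // sp11_mulmV //.
by split=> //; split=> //; apply/RegMob_sp11_inv_eq0.
Qed.

End PhiPoint.

Section InducedMaps.
Variable R : realType.
Implicit Types q : quat R.
Implicit Types X : mat2 R.

Definition ball_lift q : mat2 R :=
  let k := qreal (Num.sqrt (1 - qnorm2 q))^-1 in Mat2 k (k * qconj q) (k * q) k.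

Lemma ball_lift_sp11 q : qnorm2 q < 1 -> inSp11 (ball_lift q).
Proof.
move=> hq; have hs : 0 < Num.sqrt (1 - qnorm2 q) by rewrite sqrtr_gt0 subr_gt0.
have hk : (Num.sqrt (1 - qnorm2 q))^-1 ^+ 2 * (1 - qnorm2 q) = 1.
  by rewrite exprVn sqr_sqrtr ?subr_ge0 ?(ltW hq) // mulVf // subr_eq0 eq_sym lt_eqF.
rewrite /ball_lift /inSp11; move: hk; move: (_^-1) => k; rewrite /qnorm2 => hk.
by apply: mat_ext; apply: quat_ext => /=; lra.
Qed.

Lemma phi_point_ball_lift q : qnorm2 q < 1 -> phi_point (ball_lift q) = q.
Proof.
move=> hq; have hs : 0 < Num.sqrt (1 - qnorm2 q) by rewrite sqrtr_gt0 subr_gt0.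
rewrite /phi_point /= qrealV invrK qreal_comm -mulrA -qrealM mulVf ?lt0r_neq0 //.
by rewrite qreal1 mulr1.
Qed.

Lemma induced_iff (ft : mat2 R -> mat2 R) (g : quat R -> quat R) (f : Ball R -> Ball R) :
  (forall X, inSp11 X -> inSp11 (ft X)) ->
  (forall X, inSp11 X -> phi_point (ft X) = g (phi_point X)) ->
  induced ft f <-> forall p, val (f p) = g (val p).
Proof.
move=> hsp hg; split => [hf p | hf X hX p].
  have hp : qnorm2 (val p) < 1 := valP p.
  have hX := ball_lift_sp11 hp.
  have hl : Phi_rel (ball_lift (val p)) p by apply/Phi_relP; rewrite ?phi_point_ball_lift.
  by rewrite ((Phi_relP (f p) (hsp _ hX)).1 (hf _ hX _ hl)) hg // phi_point_ball_lift.
by move/(Phi_relP p hX) => e; apply/(Phi_relP (f p) (hsp _ hX)); rewrite hf hg // e.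
Qed.

End InducedMaps.

Section Translations.
Variable R : realType.
Implicit Types q u : quat R.
Implicit Types A X : mat2 R.
Implicit Types a b c d : R.

Lemma lin_real_unit q c d : c ^+ 2 < d ^+ 2 -> qnorm2 q < 1 ->
  q * qreal c + qreal d \is a GRing.unit.
Proof.
move=> hcd hq.
have hsq : (q * qreal c + qreal d) * (q * qreal c + qreal d) =
    rquad (d ^+ 2) (2 * c * d) (c ^+ 2) q by rewrite /rquad; qext.
have : rquad (d ^+ 2) (2 * c * d) (c ^+ 2) q \is a GRing.unit.
  by apply: rquad_unit; rewrite ?sqr_ge0 //; lra.
by rewrite -hsq !qunitE qnorm2M; apply: contra_neq => ->; rewrite mulr0.
Qed.

Definition mob a c b d q := (q * qreal a + qreal b) / (q * qreal c + qreal d).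

Lemma Fcl_rmat a c b d q : Fcl (rmat a c b d) q = mob a c b d q.
Proof. by rewrite /Fcl /mob /= !qE; apply/esym/commrV; rewrite /GRing.comm; qext. Qed.

Lemma mobN a c b d q : mob (- a) (- c) (- b) (- d) q = mob a c b d q.
Proof. by rewrite /mob !qrealN !mulrN -!opprD invrN mulrNN. Qed.

Lemma mobNr a c b d q : mob a (- c) b (- d) q = - mob a c b d q.
Proof. by rewrite /mob !qrealN mulrN -opprD invrN mulrN. Qed.

Lemma phi_point_mull A X : inSp11 X -> m10 A = 0 -> m11 A \is a GRing.unit ->
  phi_point (mmul A X) = m11 A * phi_point X / m11 A.
Proof.
move=> hX h10 hA; have hD := sp11_m11_unit hX.
rewrite {1}/phi_point /= !qE h10 !mul0r !add0r (m10_phi_point hX).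
by rewrite invrM // !mulrA mulrK.
Qed.

Lemma phi_point_mulr_real X a c b d : inSp11 X -> c ^+ 2 < d ^+ 2 ->
  phi_point (mmul X (rmat a c b d)) = mob a c b d (phi_point X).
Proof.
move=> hX hcd; have hD := sp11_m11_unit hX.
have hP := lin_real_unit hcd (phi_point_ball hX).
rewrite {1}/phi_point /= !qE (m10_phi_point hX) /mob.
move: (phi_point X) (m11 X) hD hP => m D hD hP.
have e r s : m * D * qreal r + D * qreal s = (m * qreal r + qreal s) * D.
  by rewrite mulrDl -!mulrA !(qreal_comm _ D).
by rewrite !e invrM // mulrA mulrK.
Qed.

Lemma commutes_left_offdiag A : commutes_actions (mmul A) -> m10 A = 0 /\ m01 A = 0.
Proof.
move=> hc; have hu : inSp1 (- 1 : quat R) by rewrite /inSp1 /qnorm2 /=; ring.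
have [h _] := hc _ _ hu (sp11_mid R); rewrite !mmulm1 mmul_diagl mmul_diagr in h.
move: (congr1 (@m10 R) h) (congr1 (@m01 R) h) => /quat_eqP[/= ? ? ? ?] /quat_eqP[/= ? ? ? ?].
by split; apply: quat_ext => /=; lra.
Qed.

Lemma commute_ij_real u : Quat 0 1 0 0 * u = u * Quat 0 1 0 0 ->
  Quat 0 0 1 0 * u = u * Quat 0 0 1 0 -> u = qreal (q0 u).
Proof.
case: u => a b c d /quat_eqP[/= ? ? ? ?] /quat_eqP[/= ? ? ? ?].
by apply: quat_ext => /=; lra.
Qed.

Lemma commutes_right_real A : commutes_actions (fun X => mmul X A) ->
  A = rmat (q0 (m00 A)) (q0 (m01 A)) (q0 (m10 A)) (q0 (m11 A)).
Proof.
move=> hc.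
have hD u : inSp1 u -> mmul (mdiag u u) A = mmul A (mdiag u u).
  by move=> hu; have [_] := hc u _ hu (sp11_mid R); rewrite !mmul1m.
have /hD hi : inSp1 (Quat 0 1 0 0 : quat R) by rewrite /inSp1 /qnorm2 /=; ring.
have /hD hj : inSp1 (Quat 0 0 1 0 : quat R) by rewrite /inSp1 /qnorm2 /=; ring.
rewrite !mmul_diagl !mmul_diagr in hi hj.
rewrite /rmat -(commute_ij_real (congr1 (@m00 R) hi) (congr1 (@m00 R) hj)).
rewrite -(commute_ij_real (congr1 (@m01 R) hi) (congr1 (@m01 R) hj)).
rewrite -(commute_ij_real (congr1 (@m10 R) hi) (congr1 (@m10 R) hj)).
rewrite -(commute_ij_real (congr1 (@m11 R) hi) (congr1 (@m11 R) hj)).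
by case: A {hc hD hi hj}.
Qed.

Lemma commutes_mull_diag u : commutes_actions (mmul (mdiag 1 u)).
Proof. by move=> w X _ _; split; [rewrite !mmulA; congr mmul; mext | exact: mmulA]. Qed.

Lemma commutes_mulr_real a c b d : commutes_actions (fun X => mmul X (rmat a c b d)).
Proof. by move=> u X _ _; split; [rewrite mmulA | rewrite -!mmulA; congr mmul; mext]. Qed.

Lemma real_sp11_cases a c b d : a ^+ 2 - b ^+ 2 = 1 -> d ^+ 2 - c ^+ 2 = 1 ->
  c * a = d * b -> (c = b /\ d = a) \/ (c = - b /\ d = - a).
Proof.
move=> h1 h2 h3.
have ha : a != 0 by apply/eqP => a0; rewrite a0 in h1; nra.
have : (c * a) ^+ 2 = (d * b) ^+ 2 by rewrite h3.
rewrite !exprMn => hsq.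
have hda : d ^+ 2 = a ^+ 2 by nra.
move/eqP: hda; rewrite eqf_sqr => /orP[] /eqP hd; [left | right];
  by split => //; apply: (mulIf ha); rewrite h3 hd; ring.
Qed.

Lemma cosh_sinh (t : R) : coshR t ^+ 2 - sinhR t ^+ 2 = 1.
Proof.
have := lt0r_neq0 (expR_gt0 t).
by rewrite /coshR /sinhR expRN => ht; field.
Qed.

Lemma cosh_sinh_surj c s : 0 < c -> c ^+ 2 - s ^+ 2 = 1 ->
  exists t, coshR t = c /\ sinhR t = s.
Proof.
move=> hc h.
have hcs : 0 < c + s by nra.
have e : (c + s)^-1 = c - s.
  by apply: (mulfI (lt0r_neq0 hcs)); rewrite divff ?lt0r_neq0 // -h; ring.
by exists (ln (c + s)); rewrite /coshR /sinhR expRN lnK ?posrE // e; split; field.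
Qed.

Lemma mob_Hmat a b : a ^+ 2 - b ^+ 2 = 1 ->
  exists t, forall q, mob a b b a q = Fcl (Hmat t) q.
Proof.
move=> h; have [ha | ha] := ltP 0 a.
  by have [t [<- <-]] := cosh_sinh_surj ha h; exists t => q; rewrite Fcl_rmat.
have hna : 0 < - a by nra.
have hnab : (- a) ^+ 2 - (- b) ^+ 2 = 1 by rewrite !sqrrN.
have [t [ht hs]] := cosh_sinh_surj hna hnab.
by exists t => q; rewrite -mobN Fcl_rmat ht hs.
Qed.

End Translations.

Lemma gen_group_mono (T : Type) (S S' : (T -> T) -> Prop) :
  (forall f, S f -> gen_group S' f) -> forall f, gen_group S f -> gen_group S' f.
Proof.
move=> hS f; elim=> {f} [f /hS // | | f g _ hf _ hg | f g _ hf hfg hgf].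
- exact: gen_id.
- exact: gen_comp.
- exact: gen_inv hf hfg hgf.
Qed.

Section Generation.
Variable R : realType.
Implicit Types f : Ball R -> Ball R.

Lemma ball_map_eq f f' : (forall p, val (f p) = val (f' p)) -> f = f'.
Proof.
move=> h; apply: functional_extensionality => p; move: (h p).
by case: (f p) => x hx; case: (f' p) => y hy /= exy; subst y; congr exist; apply: bool_irrelevance.
Qed.

Lemma inB_opp (p : Ball R) : inB (- val p).
Proof. by rewrite /inB /qnorm2 /=; have := valP p; rewrite /inB /qnorm2; lra. Qed.

Definition ball_opp (p : Ball R) : Ball R := exist (@inB R) (- val p) (inB_opp p).

Lemma gen_group_opp (S : (Ball R -> Ball R) -> Prop) f :
  S ball_opp -> S (ball_opp \o f) -> gen_group S f.
Proof.
move=> hopp hf.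
have -> : f = ball_opp \o (ball_opp \o f) by apply: ball_map_eq => p /=; rewrite opprK.
by apply: gen_comp; apply: gen_in.
Qed.

Lemma translation_conj u f : inSp1 u ->
  (forall p, val (f p) = u * val p * qconj u) -> translation_maps f.
Proof.
move=> hu hf; have hA : inSp11 (mdiag 1 u).
  by move: hu; rewrite /inSp1 /inSp11 /qnorm2 => hu; apply: mat_ext; apply: quat_ext => /=; lra.
exists (mdiag 1 u); split => //; left; split; first exact: commutes_mull_diag.
apply/(induced_iff (g := fun q => u * q * qconj u) f (fun X hX => sp11M hA hX)) => // X hX.
by rewrite phi_point_mull //= ?sphere_unit ?qinv_sphere.
Qed.

Lemma translation_right_real a c b d f : inSp11 (rmat a c b d) ->
  (forall p, val (f p) = mob a c b d (val p)) -> translation_maps f.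
Proof.
move=> hA hf; exists (rmat a c b d); split => //; right; split; first exact: commutes_mulr_real.
apply/(induced_iff (g := mob a c b d) f (fun X hX => sp11M hX hA)) => // X hX.
by apply: phi_point_mulr_real => //; have [_ + _] := (rmat_sp11P a c b d).1 hA; lra.
Qed.

Lemma translation_opp : translation_maps ball_opp.
Proof.
apply: (@translation_right_real (-1) 0 0 1); first by apply/rmat_sp11P; split; ring.
by move=> p; rewrite /mob qrealN qreal0 qreal1 mulr0 add0r addr0 invr1 mulr1 mulrN1.
Qed.

Lemma listed_opp : listed_maps ball_opp.
Proof.
left; exists (-1), 1; split; first by right.
by split => [|p]; [rewrite /inSp1 /qnorm2 /=; ring | qext].
Qed.

Lemma left_translation_listed A f : inSp11 A -> commutes_actions (mmul A) ->
  induced (mmul A) f -> listed_maps f.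
Proof.
move=> hA hc hf; have [h10 h01] := commutes_left_offdiag hc.
have hu : inSp1 (m11 A).
  by have [_ + _] := sp11_cols hA; rewrite h01 qnorm2_0 subr0.
have hg X : inSp11 X -> phi_point (mmul A X) = m11 A * phi_point X / m11 A.
  by move=> hX; rewrite phi_point_mull ?sphere_unit.
have {}hf := (induced_iff (g := fun q => m11 A * q / m11 A) f (fun X hX => sp11M hA hX) hg).1 hf.
left; exists 1, (m11 A); split; first by left.
by split=> // p; rewrite hf qinv_sphere // qreal1 !qE mul1r.
Qed.

Lemma right_translation_gen_listed A f : inSp11 A ->
  commutes_actions (fun X => mmul X A) -> induced (fun X => mmul X A) f ->
  gen_group (@listed_maps R) f.
Proof.
move=> + /commutes_right_real eA; rewrite eA.
move: (q0 (m00 A)) (q0 (m01 A)) (q0 (m10 A)) (q0 (m11 A)) => a c b d {eA} hA hf.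
have [h1 h2 h3] := (rmat_sp11P a c b d).1 hA.
have hg X : inSp11 X -> phi_point (mmul X (rmat a c b d)) = mob a c b d (phi_point X).
  by move=> hX; apply: phi_point_mulr_real => //; lra.
have {}hf := (induced_iff (g := mob a c b d) f (fun X hX => sp11M hX hA) hg).1 hf.
have [t ht] := mob_Hmat h1.
have [[? ?] | [? ?]] := real_sp11_cases h1 h2 h3; subst c d.
  by apply: gen_in; right; exists t => p; rewrite hf ht.
apply: gen_group_opp; first exact: listed_opp.
by right; exists t => p /=; rewrite hf mobNr opprK ht.
Qed.

Lemma translation_gen_listed f : translation_maps f -> gen_group (@listed_maps R) f.
Proof.
case=> A [hA [[hc hf] | [hc hf]]]; last exact: right_translation_gen_listed hc hf.
by apply: gen_in; apply: left_translation_listed hc hf.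
Qed.

Lemma listed_gen_translation f : listed_maps f -> gen_group (@translation_maps R) f.
Proof.
case=> [[eps [u [heps [hu hf]]]] | [t hf]]; last first.
  apply: gen_in; apply: (@translation_right_real (coshR t) (sinhR t) (sinhR t) (coshR t)).
    by apply/rmat_sp11P; split; rewrite ?cosh_sinh //; ring.
  by move=> p; rewrite hf Fcl_rmat.
case: heps => ?; subst eps.
  by apply: gen_in; apply: (translation_conj hu) => p; rewrite hf qreal1 !qE mul1r.
apply: gen_group_opp; first exact: translation_opp.
by apply: (translation_conj hu) => p /=; rewrite hf qrealN qreal1 !qE mulN1r !mulNr opprK.
Qed.

End Generation.

Theorem proposition3p11 (R : realType) :
  forall f : Ball R -> Ball R,
    gen_group (@translation_maps R) f <-> gen_group (@listed_maps R) f.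
Proof.
by move=> f; split; apply: gen_group_mono => g;
  [exact: translation_gen_listed | exact: listed_gen_translation].
Qed.
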